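(* Let $\alpha>1$, $M>0$, $c_0>0$, $T>0$, and $c=\alpha^{-1/(\alpha-1)}$. Define for $0\le t<T$, $\rho\ge0$, $$\underline m(t,\rho)=\begin{cases}0,& \rho<c_0-\alpha^{1/\alpha}M(T-t)^{1/\alpha},\\ \Big(M^{\frac\alpha{\alpha-1}}-c\,\dfrac{(c_0-\rho)^{\frac\alpha{\alpha-1}}}{(T-t)^{\frac1{\alpha-1}}}\Big)^{\frac{\alpha-1}\alpha}, & c_0-\alpha^{1/\alpha}M(T-t)^{1/\alpha}\le\rho<c_0,\\ M,&\rho\ge c_0.\end{cases}$$ Then $\underline m$ is continuous and satisfies the viscosity subsolution inequality $p_1+(p_2)_+^\alpha\,\underline m(t,\rho)\le0$ for all $(t,\rho)\in(0,T)\times(0,\infty)$ and all $(p_1,p_2)\in D^+\underline m(t,\rho)$.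
   Context: Fréchet superdifferential: $D^+f(x)=\{p\in\mathbb R^n:\limsup_{y\to x}\frac{f(y)-f(x)-p\cdot(y-x)}{|y-x|}\le0\}$. The equation is the mass equation $m_t+m(m_\rho)_+^\alpha=0$ for radial solutions in a volume variable $\rho$. *)

From Stdlib Require Import Reals Lra.
Open Scope R_scope.

(* Real power x^y for x >= 0, with the convention 0^y = 0 (correct for y > 0).
   Stdlib's Rpower 0 y = exp (y * ln 0) = 1, so we guard it. *)
Definition rpow (x y : R) : R := if Rlt_dec 0 x then Rpower x y else 0.

Definition pos_part (x : R) : R := Rmax x 0.

Definition dist2 (t rho s r : R) : R := sqrt ((s - t)^2 + (r - rho)^2).

Definition cst (alpha : R) : R := rpow alpha (- (1 / (alpha - 1))).

Definition mlow (alpha M c0 T : R) (t rho : R) : R :=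
  if Rlt_dec rho (c0 - rpow alpha (1 / alpha) * M * rpow (T - t) (1 / alpha)) then 0
  else if Rlt_dec rho c0 then
    rpow (rpow M (alpha / (alpha - 1))
          - cst alpha * rpow (c0 - rho) (alpha / (alpha - 1)) / rpow (T - t) (1 / (alpha - 1)))
         ((alpha - 1) / alpha)
  else M.

(* Frechet superdifferential of f : R^2 -> R at (t, rho):
   limsup_{y -> x} (f y - f x - p.(y - x)) / |y - x| <= 0, unfolded. *)
Definition superdiff (f : R -> R -> R) (t rho p1 p2 : R) : Prop :=
  forall eps, 0 < eps -> exists delta, 0 < delta /\
    forall s r, 0 < dist2 t rho s r < delta ->
      f s r - f t rho - (p1 * (s - t) + p2 * (r - rho)) <= eps * dist2 t rho s r.

Definition continuous_on2 (D : R -> R -> Prop) (f : R -> R -> R) : Prop :=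
  forall t rho, D t rho -> forall eps, 0 < eps -> exists delta, 0 < delta /\
    forall s r, D s r -> dist2 t rho s r < delta -> Rabs (f s r - f t rho) < eps.

(* For t < T all three branches of mlow are one formula
     mbar = (M^(a/(a-1)) - c (c0 - rho)_+^(a/(a-1)) / (T-t)^(1/(a-1)))_+^((a-1)/a),
   because the inner quantity factors as  c/(T-t)^(1/(a-1)) * (front^(a/(a-1)) -
   (c0-rho)_+^(a/(a-1)))  with front = a^(1/a) M (T-t)^(1/a).  Continuity follows
   since mbar is a composition of continuous maps.

   For the subsolution inequality, each component of a Frechet superdifferential
   is a super-slope of the corresponding partial map, and a super-slope is bounded
   above by the upper left Dini derivative.  We compute that bound in the three
   regions: rho >= c0 (mbar = M, flat from the left even at rho = c0, so p1, p2 <= 0);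
   c0 - rho >= front (mbar = 0 <= mbar nearby, so p1 <= 0); and the smooth region,
   where p1, p2 are bounded by the partial derivatives, which satisfy the equation
   with equality (this uses c^(a-1) = 1/a).  Finally the superdifferential of mlow
   is that of mbar, the two functions agreeing near any point with t < T. *)

From Stdlib Require Import Reals Lra.
From Coquelicot Require Import Coquelicot.
Open Scope R_scope.

Lemma rpow_pos x y : 0 < x -> rpow x y = Rpower x y.
Proof. intros Hx; unfold rpow; destruct (Rlt_dec 0 x); [reflexivity | lra]. Qed.

Lemma rpow_nonpos x y : x <= 0 -> rpow x y = 0.
Proof. intros Hx; unfold rpow; destruct (Rlt_dec 0 x); [lra | reflexivity]. Qed.

Lemma Rpower_pos x y : 0 < Rpower x y.
Proof. apply exp_pos. Qed.

Lemma rpow_ge0 x y : 0 <= rpow x y.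
Proof. unfold rpow; destruct (Rlt_dec 0 x); [left; apply Rpower_pos | lra]. Qed.

(* For a positive exponent, z |-> z^y (extended by 0 on z <= 0) is continuous
   everywhere; at points x <= 0 this is the estimate z^y < eps for z < eps^(1/y). *)
Lemma rpow_continuous y x : 0 < y -> continuous (fun z => rpow z y) x.
Proof.
  intros Hy.
  destruct (Rlt_le_dec 0 x) as [Hx | Hx].
  - apply continuous_ext_loc with (fun z => exp (y * ln z)).
    + exists (mkposreal x Hx); intros z Hz.
      change (Rabs (z - x) < x) in Hz; apply Rabs_def2 in Hz.
      rewrite rpow_pos by lra; reflexivity.
    + apply continuous_exp_comp, (continuous_scal_r y ln), continuous_ln; exact Hx.
  - apply filterlim_locally; intros eps.
    rewrite (rpow_nonpos x y Hx).
    exists (mkposreal _ (Rpower_pos eps (/ y))); intros z Hz.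
    change (Rabs (z - x) < Rpower eps (/ y)) in Hz; apply Rabs_def2 in Hz.
    change (Rabs (rpow z y - 0) < eps); rewrite Rminus_0_r.
    destruct (Rlt_le_dec 0 z) as [Hz0 | Hz0].
    + rewrite rpow_pos, Rabs_pos_eq by (auto; left; apply Rpower_pos).
      replace (pos eps) with (Rpower (Rpower eps (/ y)) y).
      * apply Rlt_Rpower_l; lra.
      * rewrite Rpower_mult, Rinv_l, Rpower_1 by (try apply cond_pos; lra); reflexivity.
    + rewrite rpow_nonpos, Rabs_R0 by exact Hz0; apply cond_pos.
Qed.
Definition inner (a M tau w : R) : R :=
  rpow M (a / (a - 1)) - cst a * rpow w (a / (a - 1)) / rpow tau (1 / (a - 1)).

Definition mbar (a M c0 T t rho : R) : R :=
  rpow (inner a M (T - t) (c0 - rho)) ((a - 1) / a).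

(* Width of the transition layer at remaining time tau: the middle branch
   lives on c0 - front < rho < c0. *)
Definition front (a M tau : R) : R := Rpower a (1 / a) * M * Rpower tau (1 / a).

Lemma cst_pos a : 1 < a -> 0 < cst a.
Proof. intros Ha; unfold cst; rewrite rpow_pos by lra; apply Rpower_pos. Qed.

Lemma front_pos a M tau : 0 < M -> 0 < front a M tau.
Proof.
  intros HM; unfold front.
  apply Rmult_lt_0_compat; [apply Rmult_lt_0_compat|]; auto; apply Rpower_pos.
Qed.

(* c (a^(1/a) M tau^(1/a))^(a/(a-1)) / tau^(1/(a-1)) = M^(a/(a-1)):
   the front is exactly where the inner quantity vanishes. *)
Lemma front_identity a M tau : 1 < a -> 0 < M -> 0 < tau ->
  cst a * Rpower (front a M tau) (a / (a - 1)) / Rpower tau (1 / (a - 1))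
  = Rpower M (a / (a - 1)).
Proof.
  intros Ha HM Ht; unfold cst, front; rewrite rpow_pos by lra.
  unfold Rpower at 1 2 5.
  rewrite !ln_mult by (try apply Rmult_lt_0_compat; auto; apply Rpower_pos).
  unfold Rpower; rewrite !ln_exp.
  unfold Rdiv; rewrite <- exp_Ropp, <- !exp_plus.
  f_equal; field; lra.
Qed.

Lemma inner_factor a M tau w : 1 < a -> 0 < M -> 0 < tau ->
  inner a M tau w = cst a / Rpower tau (1 / (a - 1))
    * (Rpower (front a M tau) (a / (a - 1)) - rpow w (a / (a - 1))).
Proof.
  intros Ha HM Ht; unfold inner.
  rewrite (rpow_pos M), (rpow_pos tau), <- (front_identity a M tau) by lra.
  field; apply Rgt_not_eq, Rpower_pos.
Qed.

Lemma inner_pos a M tau w : 1 < a -> 0 < M -> 0 < tau ->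
  w < front a M tau -> 0 < inner a M tau w.
Proof.
  intros Ha HM Ht Hw; rewrite inner_factor by auto.
  assert (Hb : 0 < a / (a - 1)) by (apply Rdiv_lt_0_compat; lra).
  apply Rmult_lt_0_compat; [apply Rdiv_lt_0_compat; [apply cst_pos | apply Rpower_pos]; lra|].
  destruct (Rlt_le_dec 0 w).
  - rewrite rpow_pos by lra.
    assert (Rpower w (a / (a - 1)) < Rpower (front a M tau) (a / (a - 1)))
      by (apply Rlt_Rpower_l; lra); lra.
  - rewrite rpow_nonpos by lra; rewrite Rminus_0_r; apply Rpower_pos.
Qed.

Lemma inner_nonpos a M tau w : 1 < a -> 0 < M -> 0 < tau ->
  front a M tau <= w -> inner a M tau w <= 0.
Proof.
  intros Ha HM Ht Hw; rewrite inner_factor by auto.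
  assert (Hf := front_pos a M tau HM).
  rewrite rpow_pos by lra.
  assert (Rpower (front a M tau) (a / (a - 1)) <= Rpower w (a / (a - 1)))
    by (apply Rle_Rpower_l; [left; apply Rdiv_lt_0_compat|]; lra).
  apply Rmult_le_0_l; [|lra].
  left; apply Rdiv_lt_0_compat; [apply cst_pos | apply Rpower_pos]; lra.
Qed.

Lemma mbar_M a M c0 T t rho : 1 < a -> 0 < M -> c0 <= rho -> mbar a M c0 T t rho = M.
Proof.
  intros Ha HM Hr; unfold mbar, inner.
  rewrite (rpow_nonpos (c0 - rho)), (rpow_pos M) by lra.
  unfold Rdiv at 2; rewrite Rmult_0_r, Rmult_0_l, Rminus_0_r.
  rewrite rpow_pos, Rpower_mult by apply Rpower_pos.
  replace (a / (a - 1) * ((a - 1) / a)) with 1 by (field; lra).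
  apply Rpower_1; lra.
Qed.

Lemma mlow_mbar a M c0 T t rho : 1 < a -> 0 < M -> t < T ->
  mlow a M c0 T t rho = mbar a M c0 T t rho.
Proof.
  intros Ha HM Ht; unfold mlow.
  destruct (Rlt_dec rho _) as [H1 | H1].
  - rewrite (rpow_pos (T - t)), (rpow_pos a) in H1 by lra.
    unfold mbar; rewrite rpow_nonpos; [reflexivity|].
    apply inner_nonpos; unfold front; lra.
  - destruct (Rlt_dec rho c0); [reflexivity|].
    symmetry; apply mbar_M; lra.
Qed.

(* mbar is jointly continuous at every point with t < T: it is built from
   continuous operations, the only division being by tau^(1/(a-1)) > 0. *)
Lemma mbar_continuous a M c0 T t rho : 1 < a -> t < T ->
  continuous (fun p : R * R => mbar a M c0 T (fst p) (snd p)) (t, rho).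
Proof.
  intros Ha Ht; unfold mbar, inner.
  assert (Hb : 0 < a / (a - 1)) by (apply Rdiv_lt_0_compat; lra).
  apply continuous_comp with (g := fun z => rpow z ((a - 1) / a)).
  2: apply rpow_continuous, Rdiv_lt_0_compat; lra.
  apply (continuous_minus (fun _ : R * R => rpow M (a / (a - 1)))); [apply continuous_const|].
  apply (continuous_mult (fun p : R * R => cst a * rpow (c0 - snd p) (a / (a - 1)))).
  - apply (continuous_mult (fun _ : R * R => cst a)); [apply continuous_const|].
    apply continuous_comp with (g := fun z => rpow z (a / (a - 1))).
    + apply (continuous_minus (fun _ : R * R => c0) snd);
        [apply continuous_const | apply continuous_snd].
    + apply rpow_continuous; exact Hb.
  - apply continuous_comp with (g := fun z => / rpow z (1 / (a - 1))).
    + apply (continuous_minus (fun _ : R * R => T) fst);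
        [apply continuous_const | apply continuous_fst].
    + apply continuous_Rinv_comp; [apply rpow_continuous, Rdiv_lt_0_compat; lra|].
      simpl; rewrite rpow_pos by lra; apply Rgt_not_eq, Rpower_pos.
Qed.

Lemma dist2_ge_t t rho s r : Rabs (s - t) <= dist2 t rho s r.
Proof.
  unfold dist2; rewrite <- sqrt_Rsqr_abs; apply sqrt_le_1_alt.
  assert (0 <= (r - rho) ^ 2) by apply pow2_ge_0.
  unfold Rsqr; simpl in *; lra.
Qed.

Lemma dist2_ge_rho t rho s r : Rabs (r - rho) <= dist2 t rho s r.
Proof.
  unfold dist2; rewrite <- sqrt_Rsqr_abs; apply sqrt_le_1_alt.
  assert (0 <= (s - t) ^ 2) by apply pow2_ge_0.
  unfold Rsqr; simpl in *; lra.
Qed.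

Lemma mlow_continuous a M c0 T : 1 < a -> 0 < M ->
  continuous_on2 (fun t rho => 0 <= t < T /\ 0 <= rho) (mlow a M c0 T).
Proof.
  intros Ha HM t rho [[_ Ht] _] eps Heps.
  destruct (proj1 (filterlim_locally _ _) (mbar_continuous a M c0 T t rho Ha Ht)
              (mkposreal eps Heps)) as [e He].
  exists e; split; [apply cond_pos|].
  intros s r [[_ Hs] _] Hd.
  rewrite !mlow_mbar by auto.
  apply (He (s, r)); split.
  - change (Rabs (s - t) < e); eapply Rle_lt_trans; [apply dist2_ge_t | exact Hd].
  - change (Rabs (r - rho) < e); eapply Rle_lt_trans; [apply dist2_ge_rho | exact Hd].
Qed.

Definition superslope (F : R -> R) (x p : R) : Prop :=
  forall eps, 0 < eps -> exists delta, 0 < delta /\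
    forall h, 0 < Rabs h < delta -> F (x + h) - F x - p * h <= eps * Rabs h.

Definition left_dini_le (F : R -> R) (x d : R) : Prop :=
  forall eps, 0 < eps -> exists delta, 0 < delta /\
    forall h, - delta < h < 0 -> (d + eps) * h <= F (x + h) - F x.

Lemma superdiff_local f g t rho p1 p2 r0 : 0 < r0 ->
  (forall s r, dist2 t rho s r < r0 -> f s r = g s r) ->
  superdiff f t rho p1 p2 -> superdiff g t rho p1 p2.
Proof.
  intros Hr0 Hfg Hf eps Heps.
  destruct (Hf eps Heps) as [d [Hd Hball]].
  exists (Rmin d r0); split; [apply Rmin_pos; auto|].
  intros s r [Hpos Hlt].
  assert (Hmd := Rmin_l d r0); assert (Hmr := Rmin_r d r0).
  assert (Hc : dist2 t rho t rho < r0).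
  { unfold dist2; replace ((t - t) ^ 2 + (rho - rho) ^ 2) with 0 by ring.
    rewrite sqrt_0; lra. }
  rewrite <- (Hfg s r), <- (Hfg t rho) by lra.
  apply Hball; lra.
Qed.

Lemma dist2_t t rho h : dist2 t rho (t + h) rho = Rabs h.
Proof. unfold dist2; rewrite <- sqrt_Rsqr_abs; f_equal; unfold Rsqr; ring. Qed.

Lemma dist2_rho t rho h : dist2 t rho t (rho + h) = Rabs h.
Proof. unfold dist2; rewrite <- sqrt_Rsqr_abs; f_equal; unfold Rsqr; ring. Qed.

Lemma superdiff_slope_t f t rho p1 p2 :
  superdiff f t rho p1 p2 -> superslope (fun s => f s rho) t p1.
Proof.
  intros Hf eps Heps; destruct (Hf eps Heps) as [d [Hd Hball]].
  exists d; split; [exact Hd|]; intros h Hh.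
  specialize (Hball (t + h) rho); rewrite dist2_t in Hball.
  replace (p1 * h) with (p1 * (t + h - t) + p2 * (rho - rho)) by ring.
  exact (Hball Hh).
Qed.

Lemma superdiff_slope_rho f t rho p1 p2 :
  superdiff f t rho p1 p2 -> superslope (fun r => f t r) rho p2.
Proof.
  intros Hf eps Heps; destruct (Hf eps Heps) as [d [Hd Hball]].
  exists d; split; [exact Hd|]; intros h Hh.
  specialize (Hball t (rho + h)); rewrite dist2_rho in Hball.
  replace (p2 * h) with (p1 * (t - t) + p2 * (rho + h - rho)) by ring.
  exact (Hball Hh).
Qed.

(* Comparing the two one-sided estimates along h -> 0- bounds a super-slope
   by the upper left Dini derivative. *)
Lemma superslope_le F x p d : superslope F x p -> left_dini_le F x d -> p <= d.
Proof.
  intros Hs Hd; destruct (Rle_lt_dec p d) as [|Hpd]; [assumption | exfalso].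
  set (e := (p - d) / 3); assert (He : 0 < e) by (unfold e; lra).
  destruct (Hs e He) as [d1 [Hd1 H1]]; destruct (Hd e He) as [d2 [Hd2 H2]].
  assert (Hm1 := Rmin_l d1 d2); assert (Hm2 := Rmin_r d1 d2).
  assert (Hm : 0 < Rmin d1 d2) by (apply Rmin_pos; auto).
  set (h := - Rmin d1 d2 / 2).
  assert (Hh : Rabs h = - h) by (apply Rabs_left; unfold h; lra).
  specialize (H1 h ltac:(rewrite Hh; unfold h; lra)).
  specialize (H2 h ltac:(unfold h; lra)).
  rewrite Hh in H1.
  (* adding the two estimates gives (p - d - 2e) (-h) <= 0 with p - d - 2e = e > 0 *)
  assert (0 < e * (- h)) by (apply Rmult_lt_0_compat; unfold h; lra).
  unfold e in *; nra.
Qed.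

Lemma left_dini_of_deriv (F g : R -> R) x d delta0 : 0 < delta0 ->
  (forall h, - delta0 < h <= 0 -> F (x + h) = g (x + h)) ->
  derivable_pt_lim g x d -> left_dini_le F x d.
Proof.
  intros H0 Hagree Hd eps He; destruct (Hd eps He) as [dl Hdl].
  exists (Rmin delta0 dl); split; [apply Rmin_pos; [auto | apply cond_pos]|].
  intros h Hh; assert (Hm1 := Rmin_l delta0 dl); assert (Hm2 := Rmin_r delta0 dl).
  rewrite Hagree by lra; rewrite <- (Rplus_0_r x) at 2; rewrite Hagree by lra.
  rewrite Rplus_0_r.
  specialize (Hdl h ltac:(lra) ltac:(rewrite Rabs_left; lra)).
  apply Rabs_def2 in Hdl; destruct Hdl as [Hq _].
  replace (g (x + h) - g x) with ((g (x + h) - g x) / h * h) by (field; lra).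
  set (q := (g (x + h) - g x) / h) in *.
  assert (0 < (d + eps - q) * (- h)) by (apply Rmult_lt_0_compat; lra).
  nra.
Qed.

Lemma left_dini_of_left_ge (F : R -> R) x delta0 : 0 < delta0 ->
  (forall h, - delta0 < h < 0 -> F x <= F (x + h)) -> left_dini_le F x 0.
Proof.
  intros H0 Hge eps He; exists delta0; split; [exact H0|].
  intros h Hh; specialize (Hge h Hh).
  assert (0 < eps * (- h)) by (apply Rmult_lt_0_compat; lra); nra.
Qed.

(* Closed forms of the partial derivatives of mbar in the region where the
   inner quantity u = inner a M tau w is positive (tau = T - t, w = c0 - rho). *)
Definition mbar_dt (a tau w u : R) : R :=
  - (cst a * Rpower w (a / (a - 1)))
    / (a * tau * Rpower tau (1 / (a - 1)) * u) * Rpower u ((a - 1) / a).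

Definition mbar_drho (a tau w u : R) : R :=
  cst a * Rpower w (a / (a - 1))
    / (Rpower tau (1 / (a - 1)) * w * u) * Rpower u ((a - 1) / a).

(* The equation holds with equality in the smooth region:
   dt + (drho)^a * mbar = 0, using c^(a-1) = 1/a. *)
Lemma mbar_equation a tau w u : 1 < a -> 0 < tau -> 0 < w -> 0 < u ->
  mbar_dt a tau w u + Rpower (mbar_drho a tau w u) a * Rpower u ((a - 1) / a) = 0.
Proof.
  intros Ha Ht Hw Hu; unfold mbar_dt, mbar_drho, cst; rewrite rpow_pos by lra.
  rewrite <- (exp_ln tau), <- (exp_ln w), <- (exp_ln u) by lra.
  assert (Ea : exp (ln a) = a) by (apply exp_ln; lra).
  set (la := ln a) in *; set (lt := ln tau); set (lw := ln w); set (lu := ln u).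
  unfold Rpower; rewrite !ln_exp; fold la.
  assert (Hdrho : exp (- (1 / (a - 1)) * la) * exp (a / (a - 1) * lw)
      / (exp (1 / (a - 1) * lt) * exp lw * exp lu) * exp ((a - 1) / a * lu)
    = exp (- (1 / (a - 1)) * la + a / (a - 1) * lw - 1 / (a - 1) * lt - lw - lu
           + (a - 1) / a * lu)).
  { unfold Rminus; rewrite !exp_plus, !exp_Ropp; field.
    repeat split; apply Rgt_not_eq, exp_pos. }
  assert (Hdt : - (exp (- (1 / (a - 1)) * la) * exp (a / (a - 1) * lw))
      / (a * exp lt * exp (1 / (a - 1) * lt) * exp lu) * exp ((a - 1) / a * lu)
    = - exp (- (1 / (a - 1)) * la + a / (a - 1) * lw - la - lt - 1 / (a - 1) * lt
             - lu + (a - 1) / a * lu)).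
  { unfold Rminus; rewrite !exp_plus, !exp_Ropp, Ea; field.
    repeat split; try apply Rgt_not_eq, exp_pos; lra. }
  rewrite Hdt, Hdrho, ln_exp, <- exp_plus.
  match goal with |- - exp ?x + exp ?y = 0 => replace y with x by (field; lra) end.
  ring.
Qed.

Lemma front_le a M tau tau' : 1 < a -> 0 < M -> 0 < tau <= tau' ->
  front a M tau <= front a M tau'.
Proof.
  intros Ha HM Ht; unfold front.
  apply Rmult_le_compat_l; [apply Rmult_le_pos; [left; apply Rpower_pos | lra]|].
  apply Rle_Rpower_l; [left; apply Rdiv_lt_0_compat|]; lra.
Qed.

Lemma inner_Rpower a M tau w : 0 < M -> 0 < tau -> 0 < w ->
  inner a M tau w
  = Rpower M (a / (a - 1)) - cst a * Rpower w (a / (a - 1)) / Rpower tau (1 / (a - 1)).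
Proof. intros HM Ht Hw; unfold inner; rewrite !rpow_pos by assumption; reflexivity. Qed.

Lemma derivative_t A B T t g p : 0 < T - t -> 0 < A - B / Rpower (T - t) g ->
  derivable_pt_lim (fun s => Rpower (A - B / Rpower (T - s) g) p) t
    (- p * B * g / ((T - t) * Rpower (T - t) g * (A - B / Rpower (T - t) g))
     * Rpower (A - B / Rpower (T - t) g) p).
Proof.
  intros Ht Hu; apply is_derive_Reals; unfold Rpower in *; auto_derive.
  - repeat split; auto; apply Rgt_not_eq, exp_pos.
  - change (T + - t) with (T - t).
    set (E := exp (g * ln (T - t))) in *.
    change (A + - (B * / E)) with (A - B / E).
    assert (HE : 0 < E) by apply exp_pos.
    assert (0 < (A - B / E) * E) by (apply Rmult_lt_0_compat; lra).
    assert (A * E - B = (A - B / E) * E) by (field; lra).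
    field; repeat split; lra.
Qed.

Lemma derivative_rho A C c0 rho b p : 0 < c0 - rho -> 0 < A - C * Rpower (c0 - rho) b ->
  derivable_pt_lim (fun r => Rpower (A - C * Rpower (c0 - r) b) p) rho
    (p * b * C * Rpower (c0 - rho) b / ((c0 - rho) * (A - C * Rpower (c0 - rho) b))
     * Rpower (A - C * Rpower (c0 - rho) b) p).
Proof.
  intros Hw Hu; apply is_derive_Reals; unfold Rpower in *; auto_derive.
  - repeat split; assumption.
  - change (c0 + - rho) with (c0 - rho).
    set (W := exp (b * ln (c0 - rho))) in *.
    change (A + - (C * W)) with (A - C * W).
    field; repeat split; lra.
Qed.

(* In the smooth region 0 < c0 - rho < front, mbar has left t-derivative mbar_dt
   (mbar stays in the smooth region for earlier times, as the front widens). *)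
Lemma mbar_dini_t a M c0 T t rho : 1 < a -> 0 < M -> t < T ->
  0 < c0 - rho < front a M (T - t) ->
  left_dini_le (fun s => mbar a M c0 T s rho) t
    (mbar_dt a (T - t) (c0 - rho) (inner a M (T - t) (c0 - rho))).
Proof.
  intros Ha HM Ht [Hw Hwf].
  set (B := cst a * Rpower (c0 - rho) (a / (a - 1))).
  apply (left_dini_of_deriv _
    (fun s => Rpower (Rpower M (a / (a - 1)) - B / Rpower (T - s) (1 / (a - 1)))
                     ((a - 1) / a)) t _ 1); [lra | |].
  - intros h Hh; unfold mbar.
    rewrite rpow_pos, inner_Rpower by (try apply inner_pos; try lra;
      apply Rlt_le_trans with (1 := Hwf), front_le; lra).
    reflexivity.
  - assert (Hu := inner_pos a M (T - t) (c0 - rho) Ha HM ltac:(lra) Hwf).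
    rewrite inner_Rpower in * by lra; fold B in Hu |- *.
    assert (HE := Rpower_pos (T - t) (1 / (a - 1))).
    replace (mbar_dt _ _ _ _) with
      (- ((a - 1) / a) * B * (1 / (a - 1))
         / ((T - t) * Rpower (T - t) (1 / (a - 1))
            * (Rpower M (a / (a - 1)) - B / Rpower (T - t) (1 / (a - 1))))
       * Rpower (Rpower M (a / (a - 1)) - B / Rpower (T - t) (1 / (a - 1))) ((a - 1) / a)).
    + apply derivative_t; lra.
    + set (A := Rpower M (a / (a - 1))) in *.
      assert (0 < (A - B / Rpower (T - t) (1 / (a - 1))) * Rpower (T - t) (1 / (a - 1)))
        by (apply Rmult_lt_0_compat; lra).
      assert (A * Rpower (T - t) (1 / (a - 1)) - B
              = (A - B / Rpower (T - t) (1 / (a - 1))) * Rpower (T - t) (1 / (a - 1)))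
        by (field; lra).
      unfold mbar_dt; fold A B; field; repeat split; lra.
Qed.

Lemma mbar_dini_rho a M c0 T t rho : 1 < a -> 0 < M -> t < T ->
  0 < c0 - rho < front a M (T - t) ->
  left_dini_le (fun r => mbar a M c0 T t r) rho
    (mbar_drho a (T - t) (c0 - rho) (inner a M (T - t) (c0 - rho))).
Proof.
  intros Ha HM Ht [Hw Hwf].
  set (C := cst a / Rpower (T - t) (1 / (a - 1))).
  assert (HE := Rpower_pos (T - t) (1 / (a - 1))).
  assert (Hinner : forall r, 0 < c0 - r -> inner a M (T - t) (c0 - r)
            = Rpower M (a / (a - 1)) - C * Rpower (c0 - r) (a / (a - 1))).
  { intros r Hr; rewrite inner_Rpower by lra; unfold C; field; lra. }
  apply (left_dini_of_deriv _
    (fun r => Rpower (Rpower M (a / (a - 1)) - C * Rpower (c0 - r) (a / (a - 1)))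
                     ((a - 1) / a)) rho _ (front a M (T - t) - (c0 - rho))); [lra | |].
  - intros h Hh; unfold mbar.
    rewrite rpow_pos by (apply inner_pos; lra).
    rewrite Hinner by lra; reflexivity.
  - assert (Hu := inner_pos a M (T - t) (c0 - rho) Ha HM ltac:(lra) Hwf).
    rewrite Hinner in * by lra.
    replace (mbar_drho _ _ _ _) with
      ((a - 1) / a * (a / (a - 1)) * C * Rpower (c0 - rho) (a / (a - 1))
         / ((c0 - rho) * (Rpower M (a / (a - 1)) - C * Rpower (c0 - rho) (a / (a - 1))))
       * Rpower (Rpower M (a / (a - 1)) - C * Rpower (c0 - rho) (a / (a - 1))) ((a - 1) / a)).
    + apply derivative_rho; lra.
    + assert (Hc : cst a = C * Rpower (T - t) (1 / (a - 1))) by (unfold C; field; lra).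
      unfold mbar_drho; rewrite Hc; field; repeat split; lra.
Qed.

(* For 0 < u <= M^(a/(a-1)):  u <= u^((a-1)/a) * M^(1/(a-1)), because
   u^(1/a) <= (M^(a/(a-1)))^(1/a) = M^(1/(a-1)). *)
Lemma power_lower_bound a M u : 1 < a -> 0 < M -> 0 < u -> u <= Rpower M (a / (a - 1)) ->
  u <= Rpower u ((a - 1) / a) * Rpower M (1 / (a - 1)).
Proof.
  intros Ha HM Hu Hle.
  rewrite <- (Rpower_1 u) at 1 by exact Hu.
  replace 1 with ((a - 1) / a + 1 / a) at 1 by (field; lra).
  rewrite Rpower_plus; apply Rmult_le_compat_l; [left; apply Rpower_pos|].
  replace (1 / (a - 1)) with (a / (a - 1) * (1 / a)) by (field; lra).
  rewrite <- Rpower_mult; apply Rle_Rpower_l; [left; apply Rdiv_lt_0_compat|]; lra.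
Qed.

Lemma small_power a k Q : 1 < a -> 0 < Q -> 0 < k <= Rpower Q (a - 1) ->
  Rpower k (1 / (a - 1)) <= Q.
Proof.
  intros Ha HQ Hk.
  apply Rle_trans with (Rpower (Rpower Q (a - 1)) (1 / (a - 1))).
  - apply Rle_Rpower_l; [left; apply Rdiv_lt_0_compat|]; lra.
  - rewrite Rpower_mult; replace ((a - 1) * (1 / (a - 1))) with 1 by (field; lra).
    rewrite Rpower_1; lra.
Qed.

(* At the junction rho = c0 the profile is flat from the left:
   M - mbar(t, c0 - k) = O(k^(a/(a-1))) = o(k). *)
Lemma mbar_dini_rho_c0 a M c0 T t : 1 < a -> 0 < M -> t < T ->
  left_dini_le (fun r => mbar a M c0 T t r) c0 0.
Proof.
  intros Ha HM Ht eps He.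
  set (tau := T - t); assert (Htau : 0 < tau) by (unfold tau; lra).
  set (C := cst a / Rpower tau (1 / (a - 1))).
  assert (HC : 0 < C) by (apply Rdiv_lt_0_compat; [apply cst_pos | apply Rpower_pos]; lra).
  set (P := Rpower M (1 / (a - 1))); assert (HP : 0 < P) by apply Rpower_pos.
  set (Q := eps * P / C); assert (HQ : 0 < Q).
  { apply Rdiv_lt_0_compat; [apply Rmult_lt_0_compat|]; assumption. }
  assert (Hf := front_pos a M tau HM).
  exists (Rmin (front a M tau) (Rpower Q (a - 1)));
    split; [apply Rmin_pos; [lra | apply Rpower_pos]|].
  intros h Hh; assert (Hm1 := Rmin_l (front a M tau) (Rpower Q (a - 1))).
  assert (Hm2 := Rmin_r (front a M tau) (Rpower Q (a - 1))).
  rewrite Rplus_0_l, (mbar_M a M c0 T t c0) by lra.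
  set (k := - h); assert (Hk : 0 < k) by (unfold k; lra).
  unfold mbar; replace (c0 - (c0 + h)) with k by (unfold k; ring); fold tau.
  set (u := inner a M tau k).
  assert (Hu : 0 < u) by (apply inner_pos; unfold k; lra).
  assert (Hu_eq : u = M * P - C * (k * Rpower k (1 / (a - 1)))).
  { unfold u; rewrite inner_Rpower by lra.
    rewrite <- (Rpower_1 M) at 2 by lra; rewrite <- (Rpower_1 k) at 2 by lra.
    unfold P, C; rewrite <- !Rpower_plus.
    replace (1 + 1 / (a - 1)) with (a / (a - 1)) by (field; lra).
    field; apply Rgt_not_eq, Rpower_pos. }
  assert (HkQ : Rpower k (1 / (a - 1)) <= Q) by (apply small_power; unfold k in *; lra).
  assert (Hcorr : 0 <= C * (k * Rpower k (1 / (a - 1)))).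
  { apply Rmult_le_pos; [lra | apply Rmult_le_pos; [lra | left; apply Rpower_pos]]. }
  assert (Hlow : u <= Rpower u ((a - 1) / a) * P).
  { apply power_lower_bound; try assumption.
    rewrite Hu_eq; unfold P; rewrite <- (Rpower_1 M) at 1 by lra; rewrite <- Rpower_plus.
    replace (1 + 1 / (a - 1)) with (a / (a - 1)) by (field; lra); lra. }
  assert (Hscale : C * (k * Q) = eps * k * P) by (unfold Q; field; lra).
  assert (C * (k * Rpower k (1 / (a - 1))) <= C * (k * Q))
    by (apply Rmult_le_compat_l; [lra | apply Rmult_le_compat_l; lra]).
  rewrite rpow_pos by exact Hu.
  apply (Rmult_le_reg_r P); [exact HP|].
  unfold k in *; nra.
Qed.

(* Region rho >= c0: mbar = M is locally constant in t and, from the left,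
   flat in rho, so p1 <= 0 and p2 <= 0, and the inequality reduces to p1 <= 0. *)
Lemma subsolution_plateau a M c0 T t rho p1 p2 : 1 < a -> 0 < M -> t < T -> c0 <= rho ->
  superdiff (mbar a M c0 T) t rho p1 p2 ->
  p1 + rpow (pos_part p2) a * mbar a M c0 T t rho <= 0.
Proof.
  intros Ha HM Ht Hr Hsd.
  assert (Hp1 : p1 <= 0).
  { apply (superslope_le _ t p1 0 (superdiff_slope_t _ _ _ _ _ Hsd)).
    apply (left_dini_of_left_ge _ t 1); [lra|]; intros h Hh.
    rewrite !mbar_M by lra; lra. }
  assert (Hp2 : p2 <= 0).
  { apply (superslope_le _ rho p2 0 (superdiff_slope_rho _ _ _ _ _ Hsd)).
    destruct Hr as [Hr | <-]; [|apply mbar_dini_rho_c0; assumption].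
    apply (left_dini_of_left_ge _ rho (rho - c0)); [lra|]; intros h Hh.
    rewrite !mbar_M by lra; lra. }
  unfold pos_part; rewrite Rmax_right, rpow_nonpos by lra; lra.
Qed.

(* Region c0 - rho >= front: mbar vanishes at the point and is nonnegative,
   so p1 <= 0 and the inequality reduces to p1 <= 0. *)
Lemma subsolution_vacuum a M c0 T t rho p1 p2 : 1 < a -> 0 < M -> t < T ->
  front a M (T - t) <= c0 - rho ->
  superdiff (mbar a M c0 T) t rho p1 p2 ->
  p1 + rpow (pos_part p2) a * mbar a M c0 T t rho <= 0.
Proof.
  intros Ha HM Ht Hw Hsd.
  assert (H0 : mbar a M c0 T t rho = 0)
    by (apply rpow_nonpos, inner_nonpos; lra).
  assert (Hp1 : p1 <= 0).
  { apply (superslope_le _ t p1 0 (superdiff_slope_t _ _ _ _ _ Hsd)).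
    apply (left_dini_of_left_ge _ t 1); [lra|]; intros h Hh.
    rewrite H0; apply rpow_ge0. }
  rewrite H0; lra.
Qed.

(* Smooth region 0 < c0 - rho < front: p1 and p2 are bounded by the partial
   derivatives, the rho-derivative is positive, and these satisfy the equation. *)
Lemma subsolution_smooth a M c0 T t rho p1 p2 : 1 < a -> 0 < M -> t < T ->
  0 < c0 - rho < front a M (T - t) ->
  superdiff (mbar a M c0 T) t rho p1 p2 ->
  p1 + rpow (pos_part p2) a * mbar a M c0 T t rho <= 0.
Proof.
  intros Ha HM Ht Hw Hsd.
  set (u := inner a M (T - t) (c0 - rho)).
  assert (Hu : 0 < u) by (apply inner_pos; lra).
  assert (Hm : mbar a M c0 T t rho = Rpower u ((a - 1) / a)) by (apply rpow_pos, Hu).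
  assert (Hp1 : p1 <= mbar_dt a (T - t) (c0 - rho) u)
    by exact (superslope_le _ _ _ _ (superdiff_slope_t _ _ _ _ _ Hsd)
                (mbar_dini_t a M c0 T t rho Ha HM Ht Hw)).
  assert (Hp2 : p2 <= mbar_drho a (T - t) (c0 - rho) u)
    by exact (superslope_le _ _ _ _ (superdiff_slope_rho _ _ _ _ _ Hsd)
                (mbar_dini_rho a M c0 T t rho Ha HM Ht Hw)).
  assert (Hd2 : 0 < mbar_drho a (T - t) (c0 - rho) u).
  { unfold mbar_drho; apply Rmult_lt_0_compat; [|apply Rpower_pos].
    apply Rdiv_lt_0_compat;
      [apply Rmult_lt_0_compat; [apply cst_pos; lra | apply Rpower_pos]|].
    apply Rmult_lt_0_compat; [apply Rmult_lt_0_compat; [apply Rpower_pos|]|]; lra. }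
  assert (Hpow : rpow (pos_part p2) a <= Rpower (mbar_drho a (T - t) (c0 - rho) u) a).
  { unfold pos_part; destruct (Rle_lt_dec p2 0).
    - rewrite Rmax_right, rpow_nonpos by lra; left; apply Rpower_pos.
    - rewrite Rmax_left, rpow_pos by lra; apply Rle_Rpower_l; lra. }
  assert (Heq := mbar_equation a (T - t) (c0 - rho) u Ha ltac:(lra) ltac:(lra) Hu).
  assert (Hmpos := Rpower_pos u ((a - 1) / a)).
  rewrite Hm.
  assert (rpow (pos_part p2) a * Rpower u ((a - 1) / a)
          <= Rpower (mbar_drho a (T - t) (c0 - rho) u) a * Rpower u ((a - 1) / a))
    by (apply Rmult_le_compat_r; lra).
  lra.
Qed.

Lemma mbar_subsolution a M c0 T t rho p1 p2 : 1 < a -> 0 < M -> t < T ->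
  superdiff (mbar a M c0 T) t rho p1 p2 ->
  p1 + rpow (pos_part p2) a * mbar a M c0 T t rho <= 0.
Proof.
  intros Ha HM Ht Hsd.
  destruct (Rle_lt_dec c0 rho) as [Hr | Hr].
  - apply (subsolution_plateau a M c0 T t rho p1 p2); assumption.
  - destruct (Rlt_le_dec (c0 - rho) (front a M (T - t))) as [Hw | Hw].
    + apply (subsolution_smooth a M c0 T t rho p1 p2 Ha HM Ht); [split; lra | exact Hsd].
    + apply (subsolution_vacuum a M c0 T t rho p1 p2); assumption.
Qed.

Theorem mainTheorem7 (alpha M c0 T : R) :
  1 < alpha -> 0 < M -> 0 < c0 -> 0 < T ->
  continuous_on2 (fun t rho => 0 <= t < T /\ 0 <= rho) (mlow alpha M c0 T) /\
  (forall t rho p1 p2, 0 < t < T -> 0 < rho ->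
     superdiff (mlow alpha M c0 T) t rho p1 p2 ->
     p1 + rpow (pos_part p2) alpha * mlow alpha M c0 T t rho <= 0).
Proof.
  intros Ha HM _ _; split; [apply mlow_continuous; assumption|].
  intros t rho p1 p2 [_ Ht] _ Hsd.
  rewrite mlow_mbar by assumption.
  apply mbar_subsolution; try assumption.
  (* mlow and mbar agree on the ball of radius T - t around (t, rho) *)
  apply (superdiff_local (mlow alpha M c0 T) _ t rho p1 p2 (T - t)); [lra | | exact Hsd].
  intros s r Hd; apply mlow_mbar; try assumption.
  assert (Hs : Rabs (s - t) < T - t) by (eapply Rle_lt_trans; [apply dist2_ge_t | exact Hd]).
  apply Rabs_def2 in Hs; lra.
Qed.
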